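(* There is no nonzero finite-dimensional smooth genuine $k$-representation of $\widetilde G$.
   Context: Let $p$ be an odd prime and $k$ an algebraically closed field of characteristic $p$. Let $G=\mathrm{GL}_2(\mathbb{Q}_p)$, $v$ the $p$-adic valuation, $\mu_2=\{\pm1\}$, $\omega\colon\mathbb{Q}_p^\times\to\mathbb{F}_p^\times$, $x\mapsto (xp^{-v(x)}\bmod p)$, Hilbert symbol $(a,b)=\omega\big((-1)^{v(a)v(b)}b^{v(a)}/a^{v(b)}\big)^{(p-1)/2}$. For $g=\begin{pmatrix}a&b\\c&d\end{pmatrix}$ put $\mathfrak c(g)=c$ if $c\neq0$, $\mathfrak c(g)=d$ if $c=0$. The metaplectic cover $\widetilde G$ is the topological group $G\times\mu_2$ with $(g_1,\zeta_1)(g_2,\zeta_2)=(g_1g_2,\zeta_1\zeta_2\sigma(g_1,g_2))$, $\sigma(g_1,g_2)=\big(\mathfrak c(g_1g_2)/\mathfrak c(g_1),\ \det(g_1)\mathfrak c(g_1g_2)/\mathfrak c(g_2)\big)$. $\iota\colon\mu_2\to k^\times$ is the nontrivial character; a smooth representation is genuine if $\mu_2$ acts through $\iota$. *)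

From HB Require Import structures.
From mathcomp Require Import all_boot all_order all_algebra.
From Stdlib Require Import ClassicalEpsilon.
Set Implicit Arguments. Unset Strict Implicit. Unset Printing Implicit Defensive.
Import Order.TTheory GRing.Theory Num.Theory.
Local Open Scope ring_scope.

(* [vge v x n] : "v(x) >= n", with the convention v(0) = +oo. *)
Definition vge (F : fieldType) (v : F -> int) (x : F) (n : int) : bool :=
  (x == 0) || (n <= v x).

(* (F, v) is a complete discretely valued field of characteristic 0 with
   valuation normalised by v(p) = 1 and residue field F_p.  Such a valued
   field is isomorphic to (Q_p, p-adic valuation). *)
Definition is_Qp (p : nat) (F : fieldType) (v : F -> int) : Prop :=
  [/\ (p%:R : F) != 0 /\ v p%:R = 1,
      (forall x y : F, x != 0 -> y != 0 -> v (x * y) = v x + v y),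
      (forall (x y : F) (n : int), vge v x n -> vge v y n -> vge v (x + y) n),
      (forall x : F, vge v x 0 -> exists2 d : nat, (d < p)%N & vge v (x - d%:R) 1)
    & (forall u : nat -> F,
        (forall m : nat, exists N, forall i j, (N <= i)%N -> (N <= j)%N ->
            vge v (u i - u j) m%:Z) ->
        exists l : F, forall m : nat, exists N, forall i, (N <= i)%N ->
            vge v (u i - l) m%:Z)].

Section Meta.
Variables (p : nat) (F : fieldType) (v : F -> int).

Definition resid (x : F) : nat :=
  epsilon (inhabits 0%N) (fun d : nat => (d < p)%N /\ vge v (x - d%:R) 1).

Definition omega (x : F) : nat := resid (x / (p%:R ^ v x)).

(* Hilbert symbol (a,b) in {+1,-1}; [hilb a b = true] iff (a,b) = -1. *)
Definition hilb (a b : F) : bool :=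
  ((omega ((-1) ^ (v a * v b) * b ^ (v a) / a ^ (v b))) ^ (p.-1)./2 %% p
     == p.-1)%N.

Definition cfun (g : 'M[F]_2) : F :=
  if g ord_max ord0 != 0 then g ord_max ord0 else g ord_max ord_max.

(* metaplectic cocycle sigma(g1,g2) in mu_2 = {+1,-1}, coded as bool (true = -1) *)
Definition sigma (g1 g2 : 'M[F]_2) : bool :=
  hilb (cfun (g1 *m g2) / cfun g1) (\det g1 * cfun (g1 *m g2) / cfun g2).

(* Elements of the metaplectic cover: pairs (g, z), g invertible, z : bool
   coding (-1)^z; product (g1,z1)(g2,z2) = (g1 g2, z1 z2 sigma(g1,g2)). *)
Definition mmul (x y : 'M[F]_2 * bool) : 'M[F]_2 * bool :=
  (x.1 *m y.1, x.2 (+) y.2 (+) sigma x.1 y.1).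

(* Principal congruence subgroup K_m = 1 + p^m M_2(Z_p); these (times {+1})
   form a basis of neighbourhoods of the identity of G~ = G x mu_2. *)
Definition congr_sub (m : nat) (g : 'M[F]_2) : Prop :=
  g \in unitmx /\ forall i j, vge v (g i j - (i == j)%:R) m%:Z.

Variables (k : fieldType) (n : nat).

(* rho : G~ -> GL_n(k), defined on pairs with invertible first component *)
Definition is_rep (rho : 'M[F]_2 -> bool -> 'M[k]_n) : Prop :=
  rho 1%:M false = 1%:M /\
  forall (g1 g2 : 'M[F]_2) (z1 z2 : bool), g1 \in unitmx -> g2 \in unitmx ->
    rho (mmul (g1, z1) (g2, z2)).1 (mmul (g1, z1) (g2, z2)).2
      = rho g1 z1 *m rho g2 z2.

(* smooth: the stabiliser of every vector is open, i.e. contains some K_m x {1} *)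
Definition is_smooth (rho : 'M[F]_2 -> bool -> 'M[k]_n) : Prop :=
  forall w : 'cV[k]_n, exists2 m : nat, (0 < m)%N &
    forall g, congr_sub m g -> rho g false *m w = w.

(* genuine: mu_2 acts through the nontrivial character iota *)
Definition is_genuine (rho : 'M[F]_2 -> bool -> 'M[k]_n) : Prop :=
  rho 1%:M true = - 1%:M.

End Meta.

From mathcomp Require Import all_boot all_order all_algebra finfield.
From mathcomp Require Import zify ring.
From Stdlib Require Import ClassicalEpsilon.
Set Implicit Arguments. Unset Strict Implicit. Unset Printing Implicit Defensive.
Import Order.TTheory GRing.Theory Num.Theory.
Local Open Scope ring_scope.

(* The kernel of a smooth finite-dimensional representation is open, so it
   contains K_M for some M.  Conjugating by diagonal matrices moves every
   unipotent matrix into K_M; hence every element of SL_2, in particular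
   h = diag(r, r^-1) for a quadratic non-residue r, has a lift (h, s) acting
   trivially.  The matrix g = diag(p, 1) commutes with h, but
   sigma(g, h) = (r^-1, p) = -1 while sigma(h, g) = (1, r^-1) = +1, so the
   commutator of lifts of g and (h, s) is the central element (1, -1), which
   therefore acts trivially.  In a genuine representation it acts by -1, and
   -1 = 1 in odd characteristic forces n = 0. *)

Section Valuation.
Variables (p : nat) (F : fieldType) (v : F -> int).
Hypothesis hQ : is_Qp p v.

Lemma vM x y : x != 0 -> y != 0 -> v (x * y) = v x + v y.
Proof. by case: hQ => _ H _ _ _; apply: H. Qed.

Lemma vgeD x y m : vge v x m -> vge v y m -> vge v (x + y) m.
Proof. by case: hQ => _ _ H _ _; apply: H. Qed.

Lemma p_neq0 : (p%:R : F) != 0.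
Proof. by case: hQ => -[]. Qed.

Lemma vp : v p%:R = 1.
Proof. by case: hQ => -[]. Qed.

Lemma v1 : v 1 = 0.
Proof.
have := vM (oner_neq0 F) (oner_neq0 F); rewrite mulr1 -{1}[v 1]addr0.
by move/addrI.
Qed.

Lemma vN1 : v (-1) = 0.
Proof.
have N1_neq0 : (-1 : F) != 0 by rewrite oppr_eq0 oner_neq0.
by have := vM N1_neq0 N1_neq0; rewrite mulrNN mulr1 v1; lia.
Qed.

Lemma vN x : v (- x) = v x.
Proof.
have [->|x0] := eqVneq x 0; first by rewrite oppr0.
by rewrite -mulN1r vM ?vN1 ?add0r // oppr_eq0 oner_neq0.
Qed.

Lemma vV x : x != 0 -> v x^-1 = - v x.
Proof.
by move=> x0; have := vM x0 (invr_neq0 x0); rewrite mulfV // v1; lia.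
Qed.

Lemma vpX j : v (p%:R ^+ j) = j.
Proof.
elim: j => [|j IH]; first by rewrite expr0 v1.
by rewrite exprS vM ?expf_neq0 ?p_neq0 // vp IH -addn1 PoszD addrC.
Qed.

Lemma vge0 m : vge v 0 m.
Proof. by rewrite /vge eqxx. Qed.

Lemma vgeN x m : vge v x m -> vge v (- x) m.
Proof. by rewrite /vge oppr_eq0 vN. Qed.

Lemma vgeB x y m : vge v x m -> vge v y m -> vge v (x - y) m.
Proof. by move=> hx /vgeN; apply: vgeD. Qed.

Lemma vgeM x y a b : vge v x a -> vge v y b -> vge v (x * y) (a + b).
Proof.
rewrite /vge mulf_eq0; have [//|x0] := eqVneq x 0; have [//|y0] := eqVneq y 0.
by rewrite /= vM //; apply: lerD.
Qed.

Lemma vge_le x a b : a <= b -> vge v x b -> vge v x a.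
Proof. by rewrite /vge => ab /orP [->//|bx]; rewrite (le_trans ab bx) orbT. Qed.

Lemma vge_nat d : vge v d%:R 0.
Proof.
elim: d => [|d IH]; first exact: vge0.
by rewrite -addn1 natrD; apply: vgeD => //; rewrite /vge v1 lexx orbT.
Qed.

Lemma vge_scale x m : exists2 a : F, a != 0 & vge v (a * x) m.
Proof.
exists (p%:R ^+ `|m - v x|); first by rewrite expf_neq0 ?p_neq0.
rewrite /vge mulf_eq0 expf_eq0 (negbTE p_neq0) andbF /=.
have [//|x0] := eqVneq x 0; rewrite vM ?expf_neq0 ?p_neq0 // vpX; lia.
Qed.

Hypothesis p_pr : prime p.

(* Bezout: a unit digit d satisfies u d - w p = 1, and v(1) = 0 < 1. *)
Lemma digit_not_vge1 d : (0 < d < p)%N -> ~ vge v d%:R 1.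
Proof.
case/andP => d0 dp dv.
have [u w E _] := egcdnP p d0.
have /eqP cop : coprime d p.
  by rewrite coprime_sym prime_coprime //; apply/negP => /(dvdn_leq d0); rewrite leqNgt dp.
have pv : vge v p%:R 1 by rewrite /vge vp lexx orbT.
have := vgeB (vgeM (vge_nat u) dv) (vgeM (vge_nat w) pv).
by rewrite !add0r -!natrM E cop natrD addrAC subrr add0r /vge oner_eq0 v1.
Qed.

Lemma v_digit d : (0 < d < p)%N -> (d%:R : F) != 0 /\ v d%:R = 0.
Proof.
move=> dp; have := digit_not_vge1 dp; have := vge_nat d; rewrite /vge.
by case: eqP => //= _ ge0 /negP; rewrite -ltNge => lt1; split => //; lia.
Qed.

Lemma digit_uniq x d d' : (d < p)%N -> (d' < p)%N ->
  vge v (x - d%:R) 1 -> vge v (x - d'%:R) 1 -> d = d'.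
Proof.
wlog le_d'd : d d' / (d' <= d)%N.
  by move=> W dp d'p hd hd'; case: (leqP d' d) => [|/ltnW] le; [|symmetry]; apply: W.
move=> dp _ hd hd'; apply/eqP; rewrite eqn_leq le_d'd andbT leqNgt; apply/negP => lt.
have := vgeB hd' hd.
have -> : x - d'%:R - (x - d%:R) = (d - d')%:R :> F by rewrite natrB //; ring.
by apply: digit_not_vge1; rewrite subn_gt0 lt (leq_ltn_trans (leq_subr _ _) dp).
Qed.

Lemma resid_digit x d : (d < p)%N -> vge v (x - d%:R) 1 -> resid p v x = d.
Proof.
move=> dp hd; rewrite /resid.
have [|d'p hd'] := @epsilon_spec nat (inhabits 0%N)
  (fun d : nat => (d < p)%N /\ vge v (x - d%:R) 1); first by exists d.
exact: digit_uniq d'p dp hd' hd.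
Qed.

Lemma omega_digit d : (0 < d < p)%N -> omega p v d%:R = d.
Proof.
move=> dp; have [_ vd] := v_digit dp.
rewrite /omega vd expr0z divr1; apply: resid_digit; first by case/andP: dp.
by rewrite subrr vge0.
Qed.

Lemma hilb_units a b : (2 < p)%N -> v a = 0 -> v b = 0 -> hilb p v a b = false.
Proof.
move=> p_gt2 va vb; rewrite /hilb va vb mul0r !expr0z mulr1 divr1.
have -> : (1 : F) = 1%:R by [].
rewrite omega_digit ?(ltnW p_gt2) // exp1n modn_small ?prime_gt1 //.
by apply/negbTE; rewrite neq_ltn -ltnS prednK ?prime_gt0 ?p_gt2.
Qed.

Lemma hilb_unit_p u : v u = 0 ->
  hilb p v u p%:R = ((omega p v u^-1) ^ (p.-1)./2 %% p == p.-1)%N.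
Proof. by move=> vu; rewrite /hilb vu vp mul0r !expr0z expr1z mul1r div1r. Qed.

End Valuation.

(* x ^+ h = 1 has at most h roots, fewer than the 2h nonzero elements; any
   other nonzero x has (x ^+ h) ^+ 2 = 1 and x ^+ h != 1. *)
Lemma finField_exists_expr_half_eqN1 (K : finFieldType) :
  odd #|K| -> exists x : K, x ^+ (#|K|.-1)./2 = -1.
Proof.
move=> oK; set h := (#|K|.-1)./2.
have h2 : h.*2 = #|K|.-1 by rewrite /h -(odd_halfK oK) half_double odd_halfK.
have h_gt0 : (0 < h)%N.
  by move: (odd_gt2 oK (card_finNzRing_gt1 K)) h2; rewrite -muln2; lia.
have /allPn [x] : ~~ all h.-unity_root (enum (predC1 (0 : K))).
  apply/negP => /(max_unity_roots h_gt0)/(_ (enum_uniq _)).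
  by rewrite -cardE cardC1 -h2 -addnn leqNgt -addn1 leq_add2l h_gt0.
rewrite mem_enum unity_rootE => x0 xh1; exists x.
have : (x ^+ h) ^+ 2 = 1.
  rewrite -exprM muln2 h2; apply: (mulfI x0); rewrite -exprS prednK ?expf_card ?mulr1 //.
  exact: ltnW (card_finNzRing_gt1 K).
by move/eqP; rewrite sqrf_eq1 (negbTE xh1) => /eqP.
Qed.

Lemma exists_nonresidue p : prime p -> odd p ->
  exists2 r, (0 < r < p)%N & (r ^ (p.-1)./2 %% p = p.-1)%N.
Proof.
move=> p_pr p_odd.
have [|x] := @finField_exists_expr_half_eqN1 'F_p; rewrite card_Fp //.
have p1p : (p.-1 < p)%N by rewrite ltn_predL prime_gt0.
have N1E : -1 = (p.-1)%:R :> 'F_p by rewrite -subn1 natrB ?prime_gt0 // pchar_Fp_0 // sub0r.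
have xp : (x < p)%N by rewrite -[X in (_ < X)%N](Fp_cast p_pr) ltn_ord.
have xr : x = (x : nat)%:R :> 'F_p by apply: val_inj; rewrite /= val_Fp_nat // modn_small.
rewrite N1E {1}xr -natrX => /(congr1 val).
rewrite /= !val_Fp_nat // (modn_small p1p) => xh.
exists x => //; rewrite xp andbT lt0n; apply/negP => /eqP x0.
have p_gt2 := odd_prime_gt2 p_odd p_pr.
by move: xh; rewrite x0 exp0n ?mod0n; lia.
Qed.

Section TwoByTwo.
Variable R : comNzRingType.

Definition mx2 (a b c d : R) : 'M[R]_2 :=
  \matrix_(i, j) if i == 0 :> nat then (if j == 0 :> nat then a else b)
                 else (if j == 0 :> nat then c else d).

Lemma mul_mx2 a b c d a' b' c' d' :
  mx2 a b c d *m mx2 a' b' c' d' =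
  mx2 (a * a' + b * c') (a * b' + b * d') (c * a' + d * c') (c * b' + d * d').
Proof.
apply/matrixP => i j; rewrite !mxE !big_ord_recr big_ord0 /= !mxE add0r.
by case: i => [[|[|i]] ?] //; case: j => [[|[|j]] ?].
Qed.

Lemma mul_mx2_diag a d a' d' :
  mx2 a 0 0 d *m mx2 a' 0 0 d' = mx2 (a * a') 0 0 (d * d').
Proof. by rewrite mul_mx2; congr mx2; ring. Qed.

Lemma mx2_1 : 1%:M = mx2 1 0 0 1.
Proof.
by apply/matrixP => i j; rewrite !mxE; case: i => [[|[|i]] ?] //; case: j => [[|[|j]] ?].
Qed.

Lemma det_mx2_diag a d : \det (mx2 a 0 0 d) = a * d.
Proof.
have -> : mx2 a 0 0 d = diag_mx (\row_j (if j == 0 :> nat then a else d)).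
  by apply/matrixP => i j; rewrite !mxE; case: i => [[|[|i]] ?] //; case: j => [[|[|j]] ?].
by rewrite det_diag !big_ord_recr big_ord0 /= !mxE mul1r.
Qed.

End TwoByTwo.

Lemma sigma_diag p (F : fieldType) (v : F -> int) (a d a' d' : F) : d != 0 -> d' != 0 ->
  sigma p v (mx2 a 0 0 d) (mx2 a' 0 0 d') = hilb p v d' (a * d ^+ 2).
Proof.
move=> d0 d'0; rewrite /sigma mul_mx2_diag det_mx2_diag /cfun !mxE /= eqxx /=.
have -> : d * d' / d = d' by rewrite mulrC mulKf.
by rewrite -mulrA mulfK // -mulrA -expr2.
Qed.

Lemma congr_sub_le (F : fieldType) (v : F -> int) m m' g :
  (m <= m')%N -> congr_sub v m' g -> congr_sub v m g.
Proof. by move=> le [gu gm]; split=> // i j; apply: vge_le (gm i j); rewrite lez_nat. Qed.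

Lemma congr_sub_upper (F : fieldType) (v : F -> int) (m : nat) (y : F) :
  vge v y m -> congr_sub v m (mx2 1 y 0 1).
Proof.
move=> ym; split.
  have /mulmx1_unit[] // : mx2 1 y 0 1 *m mx2 1 (- y) 0 1 = 1%:M.
  by rewrite mul_mx2 mx2_1; congr mx2; ring.
by case=> [[|[|i]] ?] [[|[|j]] ?]; rewrite !mxE //= ?subrr ?subr0 ?vge0.
Qed.

Lemma congr_sub_lower (F : fieldType) (v : F -> int) (m : nat) (y : F) :
  vge v y m -> congr_sub v m (mx2 1 0 y 1).
Proof.
move=> ym; split.
  have /mulmx1_unit[] // : mx2 1 0 y 1 *m mx2 1 0 (- y) 1 = 1%:M.
  by rewrite mul_mx2 mx2_1; congr mx2; ring.
by case=> [[|[|i]] ?] [[|[|j]] ?]; rewrite !mxE //= ?subrr ?subr0 ?vge0.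
Qed.

Section Representation.
Variables (p : nat) (F : fieldType) (v : F -> int) (k : fieldType) (n : nat).
Variable rho : 'M[F]_2 -> bool -> 'M[k]_n.
Hypothesis rho_rep : is_rep p v rho.

Lemma rhoM g1 g2 z1 z2 : g1 \in unitmx -> g2 \in unitmx ->
  rho (g1 *m g2) (z1 (+) z2 (+) sigma p v g1 g2) = rho g1 z1 *m rho g2 z2.
Proof. by case: rho_rep => _; apply. Qed.

Lemma smooth_congr_ker : is_smooth v rho ->
  exists M, forall g, congr_sub v M g -> rho g false = 1%:M.
Proof.
move=> smooth; have [m _ fix_e] := fin_all_exists2 (fun j => smooth (delta_mx j 0)).
exists (\max_j m j) => g /congr_sub_le gM; apply/matrixP => i j.
have /matrixP/(_ i 0) := fix_e j g (gM _ (leq_bigmax j)).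
by rewrite -colE !mxE eqxx andbT => ->.
Qed.

Definition lifts_to_ker (g : 'M[F]_2) := g \in unitmx /\ exists s, rho g s = 1%:M.

Lemma lifts_to_kerM g h : lifts_to_ker g -> lifts_to_ker h -> lifts_to_ker (g *m h).
Proof.
move=> [gu [s gs]] [hu [t ht]]; split; first by rewrite unitmx_mul gu hu.
by exists (s (+) t (+) sigma p v g h); rewrite rhoM // gs ht mulmx1.
Qed.

Lemma lifts_to_ker_conj g t t' :
  lifts_to_ker g -> t *m t' = 1%:M -> lifts_to_ker (t *m g *m t').
Proof.
move=> [gu [s gs]] tt'; have [tu t'u] := mulmx1_unit tt'.
have tt'1 : rho t false *m rho t' (sigma p v t t') = 1%:M.
  by rewrite -rhoM // tt' addbb; case: rho_rep.
split; first by rewrite !unitmx_mul tu gu t'u.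
exists (false (+) s (+) sigma p v t g (+) sigma p v t t' (+) sigma p v (t *m g) t').
by rewrite rhoM ?unitmx_mul ?tu ?gu // rhoM // gs mulmx1 tt'1.
Qed.

Lemma rho_signs_eq_of_flip G z : G \in unitmx ->
  rho G (~~ z) = rho G z -> rho 1%:M true = rho 1%:M false.
Proof.
move=> Gu Gz; have Gu' : invmx G \in unitmx by rewrite unitmx_inv.
have := rhoM z false Gu Gu'; have := rhoM (~~ z) false Gu Gu'.
rewrite Gz mulmxV // => <-.
by case: z {Gz}; case: (sigma p v G (invmx G)) => // /esym.
Qed.

(* Conjugating a trivially acting lift of h by a lift of g multiplies it by
   the central element (1, sigma(g,h) sigma(h,g)). *)
Lemma rho_signs_eq_of_commuting g h s : g \in unitmx -> h \in unitmx ->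
  g *m h = h *m g -> rho h s = 1%:M -> sigma p v g h != sigma p v h g ->
  rho 1%:M true = rho 1%:M false.
Proof.
move=> gu hu gh hs sgh.
apply: (rho_signs_eq_of_flip (G := g *m h) (z := s (+) sigma p v g h)).
  by rewrite unitmx_mul gu hu.
have sN : sigma p v h g = ~~ sigma p v g h.
  by move: sgh; case: (sigma p v g h); case: (sigma p v h g).
have := rhoM false s gu hu; have := rhoM s false hu gu.
by rewrite hs mulmx1 mul1mx gh sN addbF addFb addbN => ->.
Qed.

Hypothesis hQ : is_Qp p v.
Variable M : nat.
Hypothesis congr_ker : forall g, congr_sub v M g -> rho g false = 1%:M.

Lemma lifts_to_ker_upper x : lifts_to_ker (mx2 1 x 0 1).
Proof.
have [a a0 ax] := vge_scale hQ x M.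
have -> : mx2 1 x 0 1 = mx2 a^-1 0 0 1 *m mx2 1 (a * x) 0 1 *m mx2 a 0 0 1.
  by rewrite !mul_mx2; congr mx2; field.
apply: lifts_to_ker_conj; last by rewrite mul_mx2 mx2_1; congr mx2; field.
by split; [case: (congr_sub_upper ax) | exists false; apply/congr_ker/congr_sub_upper].
Qed.

Lemma lifts_to_ker_lower x : lifts_to_ker (mx2 1 0 x 1).
Proof.
have [a a0 ax] := vge_scale hQ x M.
have -> : mx2 1 0 x 1 = mx2 a 0 0 1 *m mx2 1 0 (a * x) 1 *m mx2 a^-1 0 0 1.
  by rewrite !mul_mx2; congr mx2; field.
apply: lifts_to_ker_conj; last by rewrite mul_mx2 mx2_1; congr mx2; field.
by split; [case: (congr_sub_lower ax) | exists false; apply/congr_ker/congr_sub_lower].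
Qed.

Lemma lifts_to_ker_torus t : t != 0 -> lifts_to_ker (mx2 t 0 0 t^-1).
Proof.
move=> t0; have -> : mx2 t 0 0 t^-1 =
    mx2 1 (t - 1) 0 1 *m mx2 1 0 1 1 *m mx2 1 (t^-1 - 1) 0 1 *m mx2 1 0 (- t) 1.
  by rewrite !mul_mx2; congr mx2; field.
by apply: lifts_to_kerM (lifts_to_kerM (lifts_to_kerM (lifts_to_ker_upper _)
  (lifts_to_ker_lower _)) (lifts_to_ker_upper _)) (lifts_to_ker_lower _).
Qed.

End Representation.

Lemma mxN1_eq1_dim0 (k : fieldType) p n : p \in [pchar k] -> odd p ->
  (- 1%:M : 'M[k]_n) = 1%:M -> n = 0%N.
Proof.
case: n => // n pk p_odd /matrixP/(_ 0 0); rewrite !mxE /= => /eqP.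
rewrite -subr_eq0 -opprD oppr_eq0 -[1 + 1]/(2%:R) -(dvdn_pcharf pk).
have := odd_prime_gt2 p_odd (pcharf_prime pk).
by move=> p_gt2 /(dvdn_leq (isT : (0 < 2)%N)); rewrite leqNgt p_gt2.
Qed.

Theorem lemma4p5 (p : nat) (F : fieldType) (v : F -> int)
  (k : closedFieldType) (n : nat) (rho : 'M[F]_2 -> bool -> 'M[k]_n) :
  prime p -> odd p -> is_Qp p v -> p \in [pchar k] ->
  is_rep p v rho -> is_smooth v rho -> is_genuine rho ->
  n = 0%N.
Proof.
move=> p_pr p_odd hQ pk rho_rep smooth genuine.
have [M congr_ker] := smooth_congr_ker smooth.
have [r r_digit r_nonres] := exists_nonresidue p_pr p_odd.
have [r0 vr] := v_digit hQ p_pr r_digit.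
have [hu [s hs]] := lifts_to_ker_torus rho_rep hQ congr_ker r0.
have p_gt2 := odd_prime_gt2 p_odd p_pr.
apply: (mxN1_eq1_dim0 pk p_odd); rewrite -genuine; have [<- _] := rho_rep.
apply: (rho_signs_eq_of_commuting rho_rep (g := mx2 p%:R 0 0 1) _ hu _ hs).
- have /mulmx1_unit[] // : mx2 p%:R 0 0 1 *m mx2 p%:R^-1 0 0 1 = 1%:M :> 'M[F]_2.
  by rewrite mul_mx2_diag mx2_1 mulfV ?(p_neq0 hQ) ?mulr1.
- by rewrite !mul_mx2_diag mulrC mul1r mulr1.
have r_inv : r%:R * r%:R^-1 ^+ 2 = r%:R^-1 :> F by rewrite expr2 mulrA mulfV ?mul1r.
rewrite !sigma_diag ?invr_neq0 ?oner_neq0 // expr1n mulr1 r_inv.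
have vr' : v r%:R^-1 = 0 by rewrite (vV hQ) // vr oppr0.
rewrite (hilb_unit_p hQ vr') invrK (omega_digit hQ p_pr r_digit) r_nonres eqxx.
by rewrite (hilb_units hQ p_pr p_gt2 (v1 hQ) vr').
Qed.
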